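(* Let $\mathbf L=(L,\vee,\wedge,0,1)$ be a complemented lattice with $0\ne1$ and $a,b,c\in L$. Then: (i) $0\odot a=a\odot0=\{0\}$; (ii) $1\odot a=a\odot1=\{a\}$; (iii) $\{a\wedge b\}\le a\odot b\le\{b\}$, and if $b\le a$ then $a\odot b=\{b\}$; (iv) if $a\le b$ then $a\odot c\le_i b\odot c$ for $i=1,2$; (v) if $\mathbf L$ is modular, then $a\le b$ if and only if $a\odot b=\{a\}$, and moreover $(a\odot b)\odot b=a\odot b$.
   Context: For $a\in L$, $a^+:=\{x\in L\mid a\vee x=1,\ a\wedge x=0\}$ (the set of all complements of $a$); for $B\subseteq L$, $B^+:=\{x\in L\mid b\vee x=1\text{ and }b\wedge x=0\text{ for all }b\in B\}$. For $A,B\subseteq L$: $A\vee B:=\{x\vee y\mid x\in A,y\in B\}$, $A\wedge B:=\{x\wedge y\mid x\in A,y\in B\}$; $A\le B$ means $x\le y$ for all $x\in A,y\in B$; $A\le_1B$ means for every $x\in A$ there is $y\in B$ with $x\le y$; $A\le_2B$ means for every $y\in B$ there is $x\in A$ with $x\le y$. Singletons are identified with their elements. Define $a\odot b:=\{b\}\wedge(\{a\}\vee b^+)=\{b\wedge(a\vee x)\mid x\in b^+\}$ and, for $A,B\subseteq L$, $A\odot B:=B\wedge(A\vee B^+)$. *)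

From HB Require Import structures.
From mathcomp Require Import all_boot all_order.
From mathcomp Require Import classical_sets.
Set Implicit Arguments. Unset Strict Implicit. Unset Printing Implicit Defensive.
Import Order.Theory.
Local Open Scope order_scope.

Section LatticeSets.
Context {d : Order.disp_t} {L : tbLatticeType d}.

Definition compl_set (b : L) : set L :=
  fun x => b `|` x = \top /\ b `&` x = \bot.

Definition compl_setB (B : set L) : set L :=
  fun x => forall b, B b -> b `|` x = \top /\ b `&` x = \bot.

Definition set_join (A B : set L) : set L :=
  fun z => exists x y, A x /\ B y /\ z = x `|` y.
Definition set_meet (A B : set L) : set L :=
  fun z => exists x y, A x /\ B y /\ z = x `&` y.

Definition set_le (A B : set L) : Prop := forall x y, A x -> B y -> x <= y.
Definition set_le1 (A B : set L) : Prop := forall x, A x -> exists y, B y /\ x <= y.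
Definition set_le2 (A B : set L) : Prop := forall y, B y -> exists x, A x /\ x <= y.

Definition set_odot (A B : set L) : set L := set_meet B (set_join A (compl_setB B)).

(* a (.) b := {b} /\ ({a} \/ b^+), singletons identified with elements *)
Definition odot (a b : L) : set L := set_meet [set b] (set_join [set a] (compl_set b)).

End LatticeSets.

Definition complemented {d : Order.disp_t} (L : tbLatticeType d) : Prop :=
  forall a : L, exists x : L, a `|` x = \top /\ a `&` x = \bot.

Definition modular {d : Order.disp_t} (L : tbLatticeType d) : Prop :=
  forall a b c : L, a <= c -> a `|` (b `&` c) = (a `|` b) `&` c.

From HB Require Import structures.
From mathcomp Require Import all_boot all_order.
From mathcomp Require Import classical_sets.
Import Order.Theory.
Local Open Scope order_scope.

(* Every element of [a (.) b] has the form [b `&` (a `|` x)] with [x] a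
   complement of [b], so it lies between [a `&` b] and [b] and grows with [a].
   The equalities (i)-(iii) and (v) then say that [b `&` (a `|` x)] does not
   depend on the complement [x]; in a modular lattice this holds for all
   [a <= b], as [b `&` (a `|` x) = a `|` (b `&` x) = a]. *)

Section Odot.
Context {d : Order.disp_t} {L : tbLatticeType d}.
Implicit Types (a b x y z : L) (A : set L).

Lemma odotP a b z :
  odot a b z <-> exists2 x, compl_set b x & z = b `&` (a `|` x).
Proof.
split.
- by move=> [_ [_ [-> [[_ [x [-> [bx ->]]]] ->]]]]; exists x.
- move=> [x bx ->]; exists b, (a `|` x); split=> //; split=> //.
  by exists a, x.
Qed.

Lemma compl_setB_set1 b : compl_setB [set b]%classic = compl_set b.
Proof.
by apply/seteqP; split=> x bx; [apply: bx | move=> _ ->].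
Qed.

Lemma meet_le_odot a b : set_le [set (a `&` b)%O]%classic (odot a b).
Proof.
move=> _ z -> /odotP [x _ ->].
by rewrite lexI leIr (le_trans (leIl _ _) (leUl _ _)).
Qed.

Lemma odot_le_set1 a b : set_le (odot a b) [set b]%classic.
Proof. by move=> z _ /odotP [x _ ->] ->; apply: leIl. Qed.

Lemma odot_le_join a a' b x :
  a <= a' -> b `&` (a `|` x) <= b `&` (a' `|` x).
Proof. by move=> aa'; rewrite leI2 // leU2. Qed.

Lemma odot_le1 a a' b : a <= a' -> set_le1 (odot a b) (odot a' b).
Proof.
move=> aa' _ /odotP [x bx ->]; exists (b `&` (a' `|` x)).
by split; [apply/odotP; exists x | apply: odot_le_join].
Qed.

Lemma odot_le2 a a' b : a <= a' -> set_le2 (odot a b) (odot a' b).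
Proof.
move=> aa' _ /odotP [x bx ->]; exists (b `&` (a `|` x)).
by split; [apply/odotP; exists x | apply: odot_le_join].
Qed.

Section Complemented.
Hypothesis hcomp : complemented L.

Lemma odot_neq0 a b : (odot a b !=set0)%classic.
Proof. by have [x bx] := hcomp b; exists (b `&` (a `|` x)); apply/odotP; exists x. Qed.

Lemma odot_eq_set1 a b y :
  (forall x, compl_set b x -> b `&` (a `|` x) = y) -> odot a b = [set y]%classic.
Proof.
move=> Ey; apply/seteqP; split=> z.
- by move=> /odotP [x bx ->]; apply: Ey.
- by move=> ->; have [x bx] := hcomp b; apply/odotP; exists x; rewrite ?Ey.
Qed.

Lemma odot_set1_le a b : odot a b = [set a]%classic -> a <= b.
Proof.
move=> Eab; have [z abz] := odot_neq0 a b.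
have za : z = a by move: abz; rewrite Eab.
by rewrite -za; apply: (odot_le_set1 _ _ _ _ abz).
Qed.

Lemma odot0x a : odot \bot a = [set \bot]%classic.
Proof. by apply: odot_eq_set1 => x [_ ax0]; rewrite join0x. Qed.

Lemma odotx0 a : odot a \bot = [set \bot]%classic.
Proof. by apply: odot_eq_set1 => x _; rewrite meet0x. Qed.

Lemma odot1x a : odot \top a = [set a]%classic.
Proof. by apply: odot_eq_set1 => x _; rewrite join1x meetx1. Qed.

Lemma odotx1 a : odot a \top = [set a]%classic.
Proof.
by apply: odot_eq_set1 => x [_]; rewrite meet1x => ->; rewrite joinx0 meet1x.
Qed.

Lemma odot_ge a b : b <= a -> odot a b = [set b]%classic.
Proof. by move=> ba; apply: odot_eq_set1 => x _; apply/meet_l/(le_trans ba)/leUl. Qed.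

Section Modular.
Hypothesis hmod : modular L.

Lemma meet_joinl_disjoint b x y : y <= b -> b `&` x = \bot -> b `&` (y `|` x) = y.
Proof. by move=> yb bx; rewrite meetC -hmod // meetC bx joinx0. Qed.

Lemma odot_le a b : a <= b -> odot a b = [set a]%classic.
Proof. by move=> ab; apply: odot_eq_set1 => x [_]; apply: meet_joinl_disjoint. Qed.

Lemma set_odot_set1 A b : set_le A [set b]%classic -> set_odot A [set b]%classic = A.
Proof.
move=> Ab; rewrite /set_odot compl_setB_set1; apply/seteqP; split=> z.
- move=> [_ [_ [-> [[y [x [Ay [[_ bx] ->]]]] ->]]]].
  by rewrite meet_joinl_disjoint //; apply: Ab.
- move=> Az; have [x [bx1 bx0]] := hcomp b; exists b, (z `|` x); split=> //.
  by split; [exists z, x | rewrite meet_joinl_disjoint //; apply: Ab].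
Qed.

End Modular.
End Complemented.
End Odot.

Theorem proposition6 (d : Order.disp_t) (L : tbLatticeType d)
  (hcomp : complemented L) (h01 : (\bot : L) <> \top) (a b c : L) :
  (* (i) *)
  (odot \bot a = [set \bot]%classic /\ odot a \bot = [set \bot]%classic) /\
  (* (ii) *)
  (odot \top a = [set a]%classic /\ odot a \top = [set a]%classic) /\
  (* (iii) *)
  (set_le [set (a `&` b)%O]%classic (odot a b) /\ set_le (odot a b) [set b]%classic /\
   (b <= a -> odot a b = [set b]%classic)) /\
  (* (iv) *)
  (a <= b -> set_le1 (odot a c) (odot b c) /\ set_le2 (odot a c) (odot b c)) /\
  (* (v) *)
  (modular L ->
     (a <= b <-> odot a b = [set a]%classic) /\
     set_odot (odot a b) [set b]%classic = odot a b).
Proof.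
split; first by split; [apply: odot0x | apply: odotx0].
split; first by split; [apply: odot1x | apply: odotx1].
split; first by split; [apply: meet_le_odot | split; [apply: odot_le_set1 | apply: odot_ge]].
split; first by move=> ab; split; [apply: odot_le1 | apply: odot_le2].
move=> hmod; split; first by split; [apply: odot_le | apply: odot_set1_le].
exact/set_odot_set1/odot_le_set1.
Qed.
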